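(* Let $G$ be a labeled complete bipartite graph with partite sets $V_1,V_2$, let $0<\gamma<\alpha<1/2$, and let $x$ be a fractional clustering of $G$. Run the following algorithm: set $S=V(G)$; while $V_1\cap S\ne\emptyset$, for each $u\in V_1\cap S$ let $T_u=\{w\in S\setminus\{u\}:x_{uw}\le\alpha\}$ and $T^*_u=\{w\in V_2\cap S:x_{uw}\le\gamma\}$, choose a pivot $u\in V_1\cap S$ maximizing $|T^*_u|$, let $T=T_u$, and if $\sum_{w\in V_2\cap T}x_{uw}\ge\alpha|V_2\cap T|/2$ output $\{u\}$ and remove $u$ from $S$, otherwise output $C=\{u\}\cup T$ and remove $C$ from $S$. Consider any iteration in which $C=\{u\}\cup T$ is output (i.e. $\sum_{w\in V_2\cap T}x_{uw}<\alpha|V_2\cap T|/2$), and let $S$ denote the set of remaining vertices at the start of that iteration. Then for every $z\in (V_1\cap S)\setminus C$, \[ \bigl|N^+(z)\cap C\bigr| \le \max\left\{\tfrac{1}{1-2\alpha},\tfrac{2}{\alpha}\right\}\left(\sum_{w\in N^+(z)\cap C}x_{zw}+\sum_{w\in N^-(z)\cap C}(1-x_{zw})\right). \]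
   Context: A fractional clustering of $G$ is a vector $x$ indexed by all unordered pairs of distinct vertices of $G$ with $x_{uv}\in[0,1]$ and $x_{vz}\le x_{vw}+x_{wz}$ for all distinct $v,w,z$; $x_{uu}=0$. $N^+(z)$, $N^-(z)$ are the sets of vertices joined to $z$ by a $+$ edge, resp. $-$ edge (for $z\in V_1$ these lie in $V_2$). (In the paper's terminology: the left side is the total cluster-cost and the sum on the right the total LP-cost of the edges from $z$ to the cluster $C$.) *)

From HB Require Import structures.
From mathcomp Require Import all_boot all_order all_algebra.
Set Implicit Arguments. Unset Strict Implicit. Unset Printing Implicit Defensive.
Import Order.TTheory GRing.Theory Num.Theory.
Local Open Scope ring_scope.

Section Clustering.
Variables (R : realFieldType) (V : finType).

Definition fractional_clustering (x : V -> V -> R) : Prop :=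
  [/\ forall u v, x u v = x v u,
      forall u, x u u = 0,
      forall u v, u != v -> 0 <= x u v <= 1
    & forall v w z, v != w -> w != z -> v != z -> x v z <= x v w + x w z].

Definition T_set (x : V -> V -> R) (alpha : R) (S : {set V}) (u : V) : {set V} :=
  [set w in S | (w != u) && (x u w <= alpha)].

Definition Tstar_set (x : V -> V -> R) (gamma : R) (V2 S : {set V}) (u : V)
  : {set V} :=
  [set w in V2 :&: S | x u w <= gamma].

Definition is_pivot (x : V -> V -> R) (gamma : R) (V1 V2 S : {set V}) (u : V)
  : Prop :=
  u \in V1 :&: S /\
  (forall v, v \in V1 :&: S ->
     #|Tstar_set x gamma V2 S v| <= #|Tstar_set x gamma V2 S u|)%N.

Definition singleton_case (x : V -> V -> R) (alpha : R) (V2 T : {set V}) (u : V)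
  : bool :=
  alpha * #|V2 :&: T|%:R / 2 <= \sum_(w in V2 :&: T) x u w.

(* The sets S of remaining vertices that can occur at the start of some
   iteration of some run of the (nondeterministic) algorithm. *)
Inductive reachable (x : V -> V -> R) (alpha gamma : R) (V1 V2 : {set V})
  : {set V} -> Prop :=
| reach_init : reachable x alpha gamma V1 V2 [set: V]
| reach_single : forall S u,
    reachable x alpha gamma V1 V2 S ->
    is_pivot x gamma V1 V2 S u ->
    singleton_case x alpha V2 (T_set x alpha S u) u ->
    reachable x alpha gamma V1 V2 (S :\ u)
| reach_cluster : forall S u,
    reachable x alpha gamma V1 V2 S ->
    is_pivot x gamma V1 V2 S u ->
    ~~ singleton_case x alpha V2 (T_set x alpha S u) u ->
    reachable x alpha gamma V1 V2 (S :\: (u |: T_set x alpha S u)).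

End Clustering.

From HB Require Import structures.
From mathcomp Require Import all_boot all_order all_algebra.
From mathcomp Require Import lra.
Import Order.TTheory GRing.Theory Num.Theory.
Local Open Scope ring_scope.

(* Since z is outside the cluster, d := x_uz > alpha.  As z is in V1, only the
   vertices w of V2 :&: T matter, and the triangle inequality through u gives
   x_zw >= d - x_uw on the + side and 1 - x_zw >= 1 - d - x_uw on the - side.
   Summing and using the cluster condition sum x_uw < alpha |V2 :&: T| / 2, the
   LP-cost is at least (alpha/2) |N+(z) :&: C| when d <= 1 - alpha/2; otherwise
   the + side alone gives (1 - 2 alpha) |N+(z) :&: C|, as x_uw <= alpha on T. *)

Section CostArithmetic.
Variable R : realFieldType.

Lemma ler_pscale_bound (k K p c : R) :
  0 < k -> 1 / k <= K -> 0 <= p -> k * p <= c -> p <= K * c.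
Proof.
move=> k0 kK p0 kpc.
have c0 : 0 <= c by apply: le_trans kpc; rewrite mulr_ge0 // ltW.
have -> : p = 1 / k * (k * p) by rewrite mulrA mul1r mulVf ?mul1r // gt_eqF.
by apply: ler_pM => //; rewrite ?divr_ge0 ?mulr_ge0 // ltW.
Qed.

Lemma cluster_cost_core (alpha d p m sP sM fP fM : R) :
  0 < alpha -> alpha < 1 / 2 -> alpha < d -> 0 <= p -> 0 <= m ->
  sP <= alpha * p -> sP + sM <= alpha * (p + m) / 2 ->
  d * p - sP <= fP -> (1 - d) * m - sM <= fM -> 0 <= fM ->
  p <= Num.max (1 / (1 - 2 * alpha)) (2 / alpha) * (fP + fM).
Proof.
move=> a0 a2 ad p0 m0 sPp sPM hfP hfM fM0.
have [d_small | d_large] := lerP d (1 - alpha / 2).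
- apply: (@ler_pscale_bound (alpha / 2)); rewrite ?le_max ?divr_gt0 //.
    by rewrite mul1r invf_div lexx orbT.
  have : alpha / 2 * p <= (d - alpha / 2) * p by rewrite ler_wpM2r //; lra.
  have : 0 <= (1 - d - alpha / 2) * m by rewrite mulr_ge0 //; lra.
  lra.
- apply: (@ler_pscale_bound (1 - 2 * alpha)); rewrite ?le_max ?lexx //; first lra.
  have : (1 - 2 * alpha) * p <= (d - alpha) * p by rewrite ler_wpM2r //; lra.
  lra.
Qed.

End CostArithmetic.

Section FractionalClustering.
Variables (R : realFieldType) (V : finType) (x : V -> V -> R).
Hypothesis hx : fractional_clustering x.

Lemma fc_le1 u v : u != v -> x u v <= 1.
Proof. by case: hx => _ _ x01 _ /x01 /andP[]. Qed.

Lemma sum_triangle_lb (A : {set V}) u z :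
  u != z -> u \notin A -> z \notin A ->
  x u z * #|A|%:R - \sum_(w in A) x u w <= \sum_(w in A) x z w.
Proof.
case: hx => xC _ _ xtri uz uA zA.
rewrite mulr_natr -sumr_const -sumrB; apply: ler_sum => w wA.
have uw : u != w by apply: contraNneq uA => ->.
have wz : w != z by apply: contraNneq zA => <-.
by have := xtri u w z uw wz uz; rewrite (xC w z); lra.
Qed.

Lemma sum_complement_lb (A : {set V}) u z :
  u != z -> u \notin A -> z \notin A ->
  (1 - x u z) * #|A|%:R - \sum_(w in A) x u w <= \sum_(w in A) (1 - x z w).
Proof.
case: hx => xC _ _ xtri uz uA zA.
rewrite mulr_natr -sumr_const -sumrB; apply: ler_sum => w wA.
have uw : u != w by apply: contraNneq uA => ->.
have zw : z != w by apply: contraNneq zA => ->.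
have zu : z != u by rewrite eq_sym.
by have := xtri z u w zu uw zw; rewrite (xC z u); lra.
Qed.

Lemma sum_complement_ge0 (A : {set V}) z :
  z \notin A -> 0 <= \sum_(w in A) (1 - x z w).
Proof.
move=> zA; apply: sumr_ge0 => w wA; rewrite subr_ge0 fc_le1 //.
by apply: contraNneq zA => ->.
Qed.

End FractionalClustering.

Section PivotCluster.
Variables (R : realFieldType) (V : finType) (x : V -> V -> R).
Variables (alpha : R) (S V2 : {set V}) (u : V).

Lemma sum_T_set_le (B : {set V}) :
  B \subset T_set x alpha S u -> \sum_(w in B) x u w <= alpha * #|B|%:R.
Proof.
move=> BT; rewrite mulr_natr -sumr_const; apply: ler_sum => w /(subsetP BT).
by rewrite inE => /andP[_ /andP[]].
Qed.

Lemma notin_T_set_gt z :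
  z \in S -> z != u -> z \notin T_set x alpha S u -> alpha < x u z.
Proof. by move=> zS zu; rewrite inE zS zu /= -ltNge. Qed.

Lemma not_singleton_case_sum (T P : {set V}) :
  ~~ singleton_case x alpha V2 T u ->
  \sum_(w in V2 :&: T :&: P) x u w + \sum_(w in V2 :&: T :\: P) x u w <=
    alpha * (#|V2 :&: T :&: P|%:R + #|V2 :&: T :\: P|%:R) / 2.
Proof.
by rewrite /singleton_case -big_setID -natrD cardsID -ltNge => /ltW.
Qed.

Lemma setI_sep_setU1 (T : {set V}) (p : pred V) :
  u \notin V2 -> [set w in V2 | p w] :&: (u |: T) = V2 :&: T :&: [set w | p w].
Proof.
move=> uV2; apply/setP => w; rewrite !inE.
have [-> | _] := eqVneq w u; first by rewrite (negbTE uV2) ?andbF.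
by case: (w \in V2) (w \in T) (p w) => [] [] [].
Qed.

Lemma setI_sepN_setU1 (T : {set V}) (p : pred V) :
  u \notin V2 -> [set w in V2 | ~~ p w] :&: (u |: T) = V2 :&: T :\: [set w | p w].
Proof.
move=> uV2; apply/setP => w; rewrite !inE.
have [-> | _] := eqVneq w u; first by rewrite (negbTE uV2) ?andbF.
by case: (w \in V2) (w \in T) (p w) => [] [] [].
Qed.

End PivotCluster.

Theorem lemma6 (R : realFieldType) (V : finType) (V1 V2 : {set V})
  (plus : V -> V -> bool) (x : V -> V -> R) (alpha gamma : R)
  (S : {set V}) (u z : V) :
  V1 :&: V2 = set0 -> V1 :|: V2 = [set: V] ->
  (forall a b, plus a b = plus b a) ->
  0 < gamma -> gamma < alpha -> alpha < 1 / 2 ->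
  fractional_clustering x ->
  reachable x alpha gamma V1 V2 S ->
  is_pivot x gamma V1 V2 S u ->
  ~~ singleton_case x alpha V2 (T_set x alpha S u) u ->
  let C := u |: T_set x alpha S u in
  let Nplus := [set w in V2 | plus z w] in
  let Nminus := [set w in V2 | ~~ plus z w] in
  z \in (V1 :&: S) :\: C ->
  #|Nplus :&: C|%:R <=
    Num.max (1 / (1 - 2 * alpha)) (2 / alpha) *
    (\sum_(w in Nplus :&: C) x z w + \sum_(w in Nminus :&: C) (1 - x z w)).
Proof.
move=> V12 _ _ g0 ga a2 hx _ [uV1S _] nsing C Np Nm /setDP[/setIP[zV1 zS] zC].
have notinV2 v : v \in V1 -> v \notin V2.
  by move=> vV1; apply: contra_eqN V12 => vV2; apply/set0Pn; exists v; rewrite inE vV1.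
have uV2 := notinV2 u (setIP uV1S).1.
have zV2 := notinV2 z zV1.
have zu : z != u by apply: contraNneq zC => ->; rewrite setU11.
have zT : z \notin T_set x alpha S u by apply: contra zC => zT; rewrite setU1r.
rewrite /Np /Nm /C setI_sep_setU1 // setI_sepN_setU1 //.
set T := T_set x alpha S u; set A := V2 :&: T; set Pz := [set w | plus z w].
have [uP uM] : u \notin A :&: Pz /\ u \notin A :\: Pz.
  by rewrite !inE (negbTE uV2) /= andbF.
have [zP zM] : z \notin A :&: Pz /\ z \notin A :\: Pz.
  by rewrite !inE (negbTE zV2) /= andbF.
have uz : u != z by rewrite eq_sym.
apply: (@cluster_cost_core _ alpha (x u z) _ #|A :\: Pz|%:R
          (\sum_(w in A :&: Pz) x u w) (\sum_(w in A :\: Pz) x u w)).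
- exact: lt_trans g0 ga.
- exact: a2.
- exact: notin_T_set_gt zS zu zT.
- exact: ler0n.
- exact: ler0n.
- by apply/sum_T_set_le/(subset_trans (subsetIl _ _))/subsetIr.
- exact: not_singleton_case_sum.
- exact: sum_triangle_lb.
- exact: sum_complement_lb.
- exact: sum_complement_ge0.
Qed.
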